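(* As $k$ ranges over $\mathbb{Z}$, the Eells–Kuiper invariant $\mu(Q^{15}_k)$, regarded as the (unordered) pair of values $\frac{k(k+1)}{2^{8}\cdot127}\pm\frac{2k+1}{2^{9}}\mod 1$ corresponding to the two spin structures of $Q^{15}_k$, takes exactly 4096 different pairs of values.
   Context: $Q^{15}_k=M^{15}_k/\tau$ is the Shimada projective space: $M^{15}_k$ is the Shimada sphere $D^8\times S^7\sqcup D^8\times S^7/\sim$ glued along $S^7\times S^7$ via $f(x)(y)=x^{k+1}yx^{-k}$ (octonion multiplication), and $\tau$ is the free involution induced by $(x,y)\mapsto(x,-y)$. Its Eells–Kuiper invariant for its two spin structures is $\frac{k(k+1)}{2^8\cdot127}\pm\frac{2k+1}{2^9}\mod1$. *)

From HB Require Import structures.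
From mathcomp Require Import all_boot all_order all_algebra.
From mathcomp Require Import finmap.
Set Implicit Arguments. Unset Strict Implicit. Unset Printing Implicit Defensive.
Import Order.TTheory GRing.Theory Num.Theory.
Local Open Scope ring_scope.
Local Open Scope fset_scope.

Definition mod1 (x : rat) : rat := x - (Num.floor x)%:~R.

Definition EK_a (k : int) : rat := (k * (k + 1))%:~R / (2 ^+ 8 * 127)%:R.
Definition EK_b (k : int) : rat := (2 * k + 1)%:~R / (2 ^+ 9)%:R.

Definition EK_pair (k : int) : {fset rat} :=
  [fset mod1 (EK_a k + EK_b k); mod1 (EK_a k - EK_b k)].

From HB Require Import structures.
From mathcomp Require Import all_boot all_order all_algebra.
From mathcomp Require Import finmap.
From mathcomp Require Import zify ring lra.

(* Completing the square, EK_a k + EK_b k and EK_a k - EK_b k are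
   w^2/N - 8065/(2N) with w = k + 64 and w = k - 63, where N = 2^8 * 127; so the
   pair is determined by the residues mod N of u^2 and (u - 127)^2, u = k + 64.
   The substitution k -> -k-1 swaps the two values, so u may be taken even.
   For even u the crossed matching of residues is excluded by parity, and by the
   Chinese remainder theorem for N = 2^8 * 127 the pair records exactly u mod 128
   and u^2 mod 127, i.e. u mod 128 and +-u mod 127: 64 * 64 classes. *)

Import Order.TTheory GRing.Theory Num.Theory.
Local Open Scope ring_scope.

Lemma fset2_eq (K : choiceType) (a b c d : K) :
  ([fset a; b]%fset == [fset c; d]%fset) = (a == c) && (b == d) || (a == d) && (b == c).
Proof.
apply/eqP/idP => [/fsetP abE|/orP[]/andP[/eqP-> /eqP->] //]; last exact: fsetUC.
move: (abE a) (abE b) (abE c) (abE d); rewrite !inE !eqxx ?orbT /=.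
by move=> /esym/orP[]/eqP ? /esym/orP[]/eqP ? /orP[]/eqP ? /orP[]/eqP ?; subst;
  rewrite !eqxx ?orbT.
Qed.

Lemma Euclid_dvdz (p : nat) (m n : int) :
  prime p -> (p %| m * n)%Z = (p %| m)%Z || (p %| n)%Z.
Proof. by move=> p_pr; rewrite !dvdzE abszM Euclid_dvdM. Qed.

Lemma eqz_mod_sqr (p : nat) (x y : int) : prime p ->
  (x ^+ 2 == y ^+ 2 %[mod p])%Z = (x == y %[mod p])%Z || (x == - y %[mod p])%Z.
Proof. by move=> p_pr; rewrite !eqz_mod_dvd subr_sqr opprK Euclid_dvdz. Qed.

Lemma mod1_eq (x y : rat) : (mod1 x == mod1 y) = (x - y \is a Num.int).
Proof.
rewrite /mod1; apply/eqP/intrP => [xyE|[m xE]].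
  by exists (Num.floor x - Num.floor y); rewrite intrB; lra.
have -> : x = y + m%:~R by lra.
by rewrite floorDrz ?intr_int // intrKfloor intrD; lra.
Qed.

Lemma intr_div_int (R : archiFieldType) (n d : int) : d != 0 ->
  (n%:~R / d%:~R : R) \is a Num.int = (d %| n)%Z.
Proof.
move=> d_nz; have dR_nz : d%:~R != 0 :> R by rewrite intr_eq0.
apply/intrP/dvdzP => [[m nE]|[m ->]]; last by exists m; rewrite intrM mulfK.
by exists m; apply/(@intr_inj R); rewrite intrM -nE divfK.
Qed.

Lemma dvdz_subr_sqr (c u v : int) :
  (c %| u - v)%Z -> (2 %| u - v)%Z -> (c * 2 %| u ^+ 2 - v ^+ 2)%Z.
Proof.
move=> c_uv two_uv; rewrite subr_sqr dvdz_mul // (_ : u + v = (u - v) + v * 2).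
  by rewrite rpredD // dvdz_mull.
by ring.
Qed.

Local Notation N := (2 ^+ 8 * 127 : int).

Lemma sqr_pair_eqmod (u v : int) : (2 %| u)%Z -> (2 %| v)%Z ->
  (u ^+ 2 == v ^+ 2 %[mod N])%Z && ((u - 127) ^+ 2 == (v - 127) ^+ 2 %[mod N])%Z
  || (u ^+ 2 == (v - 127) ^+ 2 %[mod N])%Z && ((u - 127) ^+ 2 == v ^+ 2 %[mod N])%Z
  = (u == v %[mod 128])%Z && (u ^+ 2 == v ^+ 2 %[mod 127])%Z.
Proof.
move=> u_even v_even.
have no_cross : (u ^+ 2 == (v - 127) ^+ 2 %[mod N])%Z = false.
  apply/negbTE/negP; rewrite eqz_mod_dvd => /(dvdz_trans (_ : 2 %| N)%Z).
  by rewrite -eqz_mod_dvd eqz_mod_sqr // !eqz_mod_dvd; lia.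
have sqr_shift : (u - 127) ^+ 2 - (v - 127) ^+ 2 = (u ^+ 2 - v ^+ 2) - 254 * (u - v).
  by ring.
rewrite no_cross orbF !eqz_mod_dvd sqr_shift.
have [uv_128|] := boolP (128 %| u - v)%Z; last by apply: contraNF; lia.
have uv_256 : (128 * 2 %| u ^+ 2 - v ^+ 2)%Z by apply: dvdz_subr_sqr => //; lia.
by rewrite (Gauss_dvdz _ (_ : coprimez 256 127)) // uv_256 /=; lia.
Qed.

(* 2N (EK_a k + EK_b k) = 2k^2 + 256k + 127 = 2(k + 64)^2 - 8065. *)
Definition ek_val (w : int) : rat :=
  mod1 ((w ^+ 2)%:~R / N%:~R - 8065%:~R / (2 * N)%:~R).

Lemma EK_a_add_b (k : int) : mod1 (EK_a k + EK_b k) = ek_val (k + 64).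
Proof. by rewrite /ek_val; apply: (congr1 mod1); rewrite /EK_a /EK_b; field. Qed.

Lemma EK_a_sub_b (k : int) : mod1 (EK_a k - EK_b k) = ek_val (k - 63).
Proof. by rewrite /ek_val; apply: (congr1 mod1); rewrite /EK_a /EK_b; field. Qed.

Lemma EK_pairE (k : int) : EK_pair k = [fset ek_val (k + 64); ek_val (k - 63)]%fset.
Proof. by rewrite /EK_pair EK_a_add_b EK_a_sub_b. Qed.

Lemma ek_val_eq (v w : int) : (ek_val v == ek_val w) = (v ^+ 2 == w ^+ 2 %[mod N])%Z.
Proof.
rewrite mod1_eq eqz_mod_dvd -(intr_div_int rat) //.
by apply: (congr1 (fun x => x \is a Num.int)); rewrite intrB; field.
Qed.

Lemma ek_valN (w : int) : ek_val (- w) = ek_val w.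
Proof. by rewrite /ek_val sqrrN. Qed.

Lemma EK_pair_sym (k : int) : EK_pair (- k - 1) = EK_pair k.
Proof.
rewrite !EK_pairE fsetUC.
have -> : - k - 1 + 64 = - (k - 63) by ring.
have -> : - k - 1 - 63 = - (k + 64) by ring.
by rewrite !ek_valN.
Qed.

Lemma EK_pair_eq_even (k l : int) : (2 %| k)%Z -> (2 %| l)%Z ->
  (EK_pair k == EK_pair l)
  = (k == l %[mod 128])%Z && ((k + 64) ^+ 2 == (l + 64) ^+ 2 %[mod 127])%Z.
Proof.
move=> k_even l_even; rewrite !EK_pairE fset2_eq !ek_val_eq.
have shift (w : int) : w - 63 = w + 64 - 127 by ring.
by rewrite !shift sqr_pair_eqmod ?eqz_modDr //; lia.
Qed.

(* ek_rep a b + 64 is congruent to a mod 127 and to 2b mod 128. *)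
Definition ek_rep (a b : nat) : int := 128 * a%:Z - 254 * b%:Z - 64.

Lemma ek_rep_inj (a b a' b' : nat) :
  (a < 64)%N -> (b < 64)%N -> (a' < 64)%N -> (b' < 64)%N ->
  EK_pair (ek_rep a b) = EK_pair (ek_rep a' b') -> (a, b) = (a', b').
Proof.
move=> a_lt b_lt a'_lt b'_lt /eqP.
rewrite EK_pair_eq_even /ek_rep ?eqz_mod_sqr //; try lia.
by move=> rep_congr; apply/eqP; rewrite xpair_eqE; lia.
Qed.

Lemma ek_rep_cover {k : int} : (2 %| k)%Z ->
  exists a b : nat, [/\ (a < 64)%N, (b < 64)%N & EK_pair k = EK_pair (ek_rep a b)].
Proof.
move=> k_even.
have [a a_lt a_sqr] : exists2 a : nat,
    (a < 64)%N & ((k + 64) ^+ 2 == a%:Z ^+ 2 %[mod 127])%Z.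
  set r := absz ((k + 64) %% 127)%Z.
  case: (ltnP r 64) => r_lt; [exists r | exists (127 - r)%N];
    rewrite ?eqz_mod_sqr //; lia.
exists a, (absz ((k + 64) %% 128)%Z %/ 2)%N; split; try lia.
by apply/eqP; rewrite EK_pair_eq_even /ek_rep; lia.
Qed.

Theorem proposition4p9 :
  exists S : seq {fset rat},
    [/\ uniq S, size S = 4096%N &
        forall P : {fset rat}, P \in S <-> exists k : int, P = EK_pair k].
Proof.
exists [seq EK_pair (ek_rep a b) | a <- iota 0 64, b <- iota 0 64]; split.
- apply: allpairs_uniq; rewrite ?iota_uniq // => ? ?.
  move=> /allpairsP[[a b] [+ + ->]] /allpairsP[[a' b'] [+ + ->]] /=.
  rewrite !mem_iota !add0n => /andP[_ a_lt] /andP[_ b_lt] /andP[_ a'_lt] /andP[_ b'_lt].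
  exact: ek_rep_inj.
- by rewrite size_allpairs size_iota.
- move=> P; split=> [/allpairsP[[a b] [_ _ ->]]|[k ->]]; first by exists (ek_rep a b).
  wlog k_even : k / (2 %| k)%Z => [even_case|].
    have [|k_odd] := boolP (2 %| k)%Z; first exact: even_case.
    by rewrite -EK_pair_sym; apply: even_case; lia.
  have [a [b [a_lt b_lt ->]]] := ek_rep_cover k_even.
  by apply/allpairsP; exists (a, b); rewrite !mem_iota.
Qed.
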